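(* Assume $A$ is good and $(x,w_x)$ is an optimal pair. Then there exists $k\ge0$ such that $\sigma^k(w_x)\in M$ (the support of the maximizing probability of $A^*$), and for such $k$ the pair $\hat T^{-k}(x,w_x)$ is again an optimal pair, where $\hat T^{-1}(x,w)=(\tau_wx,\sigma w)$.
   Context: $\Sigma=\{0,1\}^{\mathbb N}$; $T$ and $\sigma$ denote the shift acting on points $x$ and $w$ respectively; $\tau_w(x)=(w_0,x_0,x_1,\dots)$. $A$ is Hölder with involution kernel $W(w,x)$ and dual potential $A^*$: $A^*(w)=A(\tau_wx)+W(\sigma w,\tau_wx)-W(w,x)$; normalize $m(A)=m(A^* )=0$. $V,V^*$ are calibrated subactions for $A,A^*$; $R^*(w)=V^*(\sigma w)-V^*(w)-A^*(w)\ge0$, $I^*(w)=\sum_{n\ge0}R^*(\sigma^nw)$. It is known that, after adding a constant to $W$, $V(x)=\sup_w[W(w,x)-V^*(w)-I^*(w)]$; $b(x,w)=V(x)+V^*(w)+I^*(w)-W(w,x)\ge 0$ and $(x,w)$ is optimal iff $b(x,w)=0$. Assume the maximizing probability of $A^*$ is unique and supported on a periodic orbit $M$; $P=\{w\notin M:\sigma w\in M\}$; $A$ is good if $R^*>0$ on $P$. *)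

From Stdlib Require Import Reals List.
Import ListNotations.
Open Scope R_scope.

Definition Sigma := nat -> bool.

(** The shift (called T when acting on x and sigma when acting on w). *)
Definition shift (x : Sigma) : Sigma := fun n => x (S n).
Definition shiftn (k : nat) (x : Sigma) : Sigma := Nat.iter k shift x.

Definition tau (w x : Sigma) : Sigma :=
  fun n => match n with O => w O | S m => x m end.

(** x and y agree on the first n coordinates (i.e. d(x,y) <= 2^-n). *)
Definition agree (n : nat) (x y : Sigma) : Prop :=
  forall i, (i < n)%nat -> x i = y i.

Definition continuous_S (f : Sigma -> R) : Prop :=
  forall x eps, 0 < eps -> exists n, forall y, agree n x y -> Rabs (f x - f y) < eps.

(** Hölder continuity w.r.t. the usual metric d(x,y) = theta^{min{i : x_i <> y_i}}. *)
Definition holder (f : Sigma -> R) : Prop :=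
  exists C theta, 0 < theta < 1 /\
    forall n x y, agree n x y -> Rabs (f x - f y) <= C * theta ^ n.

Definition holder2 (W : Sigma -> Sigma -> R) : Prop :=
  exists C theta, 0 < theta < 1 /\
    forall n m w w' x x', agree n w w' -> agree m x x' ->
      Rabs (W w x - W w' x') <= C * (theta ^ n + theta ^ m).

(** Borel probability measures on Sigma, given by their values on cylinders
    [u] = {x : x_0..x_{|u|-1} = u} (Kolmogorov / Caratheodory). *)
Definition is_prob (mu : list bool -> R) : Prop :=
  mu [] = 1 /\ (forall u, 0 <= mu u) /\
  (forall u, mu u = mu (u ++ [false]) + mu (u ++ [true])).

(** shift invariance: mu(T^{-1}[u]) = mu([u]) *)
Definition is_invariant (mu : list bool -> R) : Prop :=
  is_prob mu /\ forall u, mu u = mu (false :: u) + mu (true :: u).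

Fixpoint words (n : nat) : list (list bool) :=
  match n with
  | O => [[]]
  | S k => flat_map (fun u => [u ++ [false]; u ++ [true]]) (words k)
  end.

Definition ext (u : list bool) : Sigma := fun i => nth i u false.

Definition riemann_sum (mu : list bool -> R) (f : Sigma -> R) (n : nat) : R :=
  fold_right Rplus 0 (map (fun u => mu u * f (ext u)) (words n)).

Definition integral (mu : list bool -> R) (f : Sigma -> R) (l : R) : Prop :=
  Un_cv (riemann_sum mu f) l.

(** Normalization m(f) = 0, where m(f) = max over invariant probabilities of the integral. *)
Definition m_zero (f : Sigma -> R) : Prop :=
  (forall mu l, is_invariant mu -> integral mu f l -> l <= 0) /\
  (exists mu, is_invariant mu /\ integral mu f 0).

Definition maximizing (f : Sigma -> R) (mu : list bool -> R) : Prop :=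
  is_invariant mu /\ integral mu f 0.

Definition prefix (n : nat) (x : Sigma) : list bool := map x (seq 0 n).

Definition supp (mu : list bool -> R) (x : Sigma) : Prop :=
  forall n, 0 < mu (prefix n x).

(** calibrated subaction (with m(f)=0): V(z) = max_{shift y = z} (f y + V y) *)
Definition calibrated (f V : Sigma -> R) : Prop :=
  continuous_S V /\
  (forall y, V (shift y) >= V y + f y) /\
  (forall z, exists y, shift y = z /\ V z = V y + f y).

Definition involution_kernel (A Astar : Sigma -> R) (W : Sigma -> Sigma -> R) : Prop :=
  holder2 W /\
  forall w x, Astar w = A (tau w x) + W (shift w) (tau w x) - W w x.

Definition Rstar (Astar Vstar : Sigma -> R) (w : Sigma) : R :=
  Vstar (shift w) - Vstar w - Astar w.

Definition Istar_is (Astar Vstar : Sigma -> R) (w : Sigma) (s : R) : Prop :=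
  infinite_sum (fun n => Rstar Astar Vstar (shiftn n w)) s.

(** b(x,w) = V(x)+V*(w)+I*(w)-W(w,x) = 0 (so in particular I*(w) < infinity) *)
Definition optimal_pair (Astar V Vstar : Sigma -> R) (W : Sigma -> Sigma -> R)
    (x w : Sigma) : Prop :=
  exists s, Istar_is Astar Vstar w s /\ V x + Vstar w + s - W w x = 0.

(** The normalization of W: V(x) = sup_w [W(w,x) - V*(w) - I*(w)] *)
Definition V_sup_formula (Astar V Vstar : Sigma -> R) (W : Sigma -> Sigma -> R) : Prop :=
  forall x, is_lub (fun r => exists w s, Istar_is Astar Vstar w s /\
                                         r = W w x - Vstar w - s) (V x).

Definition hatTinv (p : Sigma * Sigma) : Sigma * Sigma :=
  (tau (snd p) (fst p), shift (snd p)).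
Definition hatTinvn (k : nat) (p : Sigma * Sigma) : Sigma * Sigma := Nat.iter k hatTinv p.

From Stdlib Require Import Arith PArith Reals List Lra Lia Classical ClassicalEpsilon FunctionalExtensionality.
From Stdlib Require Rtopology.
Import ListNotations.
Open Scope R_scope.

(* Optimality propagates backwards: b(tau_w x, sigma w) <= b(x, w) because V is a subaction,
   and b >= 0, so every iterate of an optimal pair under hat T^-1 is optimal.

   For the recurrence, the Birkhoff sums of A* along an optimal w are bounded below, so a limit
   of empirical measures of w is an invariant probability with integral of A* >= 0, i.e. a
   maximizing one; by uniqueness it is the measure on the periodic orbit M, hence the orbit of w
   comes back arbitrarily close to M infinitely often. If it never entered M, it would also
   leave a fixed neighbourhood of M infinitely often, and each re-entry into a small
   neighbourhood happens from a point close to P = sigma^-1 M \ M, where R* is bounded below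
   (A is good and R* is continuous). This contradicts R*(sigma^n w) -> 0, which holds because
   I*(w) is finite. *)

Lemma shiftn_apply k y m : shiftn k y m = y (k + m)%nat.
Proof.
  revert y m; induction k as [|k IH]; intros y m; [reflexivity|].
  change (shift (shiftn k y) m = y (S k + m)%nat); unfold shift.
  rewrite IH; f_equal; lia.
Qed.

Lemma shiftn_shift k w : shiftn k (shift w) = shiftn (S k) w.
Proof.
  apply functional_extensionality; intro m.
  rewrite !shiftn_apply; unfold shift; f_equal; lia.
Qed.

Lemma shiftn_add n m w : shiftn n (shiftn m w) = shiftn (n + m) w.
Proof.
  apply functional_extensionality; intro i.
  rewrite !shiftn_apply; f_equal; lia.
Qed.

Lemma agree_le n m x y : (m <= n)%nat -> agree n x y -> agree m x y.
Proof. intros Hmn H i Hi; apply H; lia. Qed.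

Lemma Rabs_le_between x c : Rabs x <= c -> - c <= x <= c.
Proof. unfold Rabs; destruct (Rcase_abs x); lra. Qed.

(* [psum f n = f 0 + ... + f (n - 1)], whereas [sum_f_R0 f n] has n + 1 terms. *)
Fixpoint psum (f : nat -> R) (n : nat) : R :=
  match n with O => 0 | S m => psum f m + f m end.

Lemma psum_ext f g n : (forall k, (k < n)%nat -> f k = g k) -> psum f n = psum g n.
Proof.
  induction n as [|n IH]; intros H; simpl; [reflexivity|].
  rewrite IH, H; [reflexivity|lia|intros; apply H; lia].
Qed.

Lemma psum_plus f g n : psum (fun k => f k + g k) n = psum f n + psum g n.
Proof. induction n as [|n IH]; simpl; [ring|]; rewrite IH; ring. Qed.

Lemma psum_mult_r f c n : psum (fun k => f k * c) n = psum f n * c.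
Proof. induction n as [|n IH]; simpl; [ring|]; rewrite IH; ring. Qed.

Lemma psum_const c n : psum (fun _ => c) n = c * INR n.
Proof. induction n as [|n IH]; simpl psum; [simpl; ring|]; rewrite IH, S_INR; ring. Qed.

Lemma psum_shift f n : psum (fun k => f (S k)) n = psum f n + f n - f O.
Proof. induction n as [|n IH]; simpl; [ring|]; rewrite IH; ring. Qed.

Lemma psum_le f g n : (forall k, (k < n)%nat -> f k <= g k) -> psum f n <= psum g n.
Proof.
  induction n as [|n IH]; intros H; simpl; [lra|].
  apply Rplus_le_compat; [apply IH; intros; apply H|apply H]; lia.
Qed.

Lemma psum_unit_bounds f n : (forall k, 0 <= f k <= 1) -> 0 <= psum f n <= INR n.
Proof.
  intros Hf; induction n as [|n IH]; simpl psum; [simpl; lra|].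
  rewrite S_INR; specialize (Hf n); lra.
Qed.

Lemma psum_unit_finite_support f n0 n : (forall k, 0 <= f k <= 1) ->
  (forall k, (n0 <= k)%nat -> f k = 0) -> psum f n <= INR n0.
Proof.
  intros Hf Hz; induction n as [|n IH]; simpl psum; [apply pos_INR|].
  destruct (le_lt_dec n0 n) as [Hle|Hlt]; [rewrite Hz by exact Hle; lra|].
  pose proof (psum_unit_bounds f n Hf).
  assert (INR (S n) <= INR n0) by (apply le_INR; lia).
  rewrite S_INR in *; specialize (Hf n); lra.
Qed.

Definition lsum {X} (g : X -> R) (l : list X) : R := fold_right Rplus 0 (map g l).

Lemma lsum_app {X} (g : X -> R) l1 l2 : lsum g (l1 ++ l2) = lsum g l1 + lsum g l2.
Proof. induction l1 as [|a l1 IH]; unfold lsum in *; simpl; [ring|]; rewrite IH; ring. Qed.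

Lemma lsum_flat_map {X Y} (g : Y -> R) (h : X -> list Y) l :
  lsum g (flat_map h l) = lsum (fun x => lsum g (h x)) l.
Proof. induction l as [|a l IH]; [reflexivity|]; simpl; rewrite lsum_app, IH; reflexivity. Qed.

Lemma lsum_ext_in {X} (g g' : X -> R) l :
  (forall x, In x l -> g x = g' x) -> lsum g l = lsum g' l.
Proof.
  induction l as [|a l IH]; intros H; [reflexivity|]; unfold lsum in *; simpl.
  rewrite (H a (or_introl eq_refl)), IH; [reflexivity|].
  intros; apply H; right; assumption.
Qed.

Lemma lsum_plus {X} (g g' : X -> R) l : lsum (fun x => g x + g' x) l = lsum g l + lsum g' l.
Proof. induction l as [|a l IH]; unfold lsum in *; simpl; [ring|]; rewrite IH; ring. Qed.

Lemma lsum_mult_l {X} c (g : X -> R) l : lsum (fun x => c * g x) l = c * lsum g l.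
Proof. induction l as [|a l IH]; unfold lsum in *; simpl; [ring|]; rewrite IH; ring. Qed.

Lemma lsum_le {X} (g g' : X -> R) l :
  (forall x, In x l -> g x <= g' x) -> lsum g l <= lsum g' l.
Proof.
  induction l as [|a l IH]; intros H; unfold lsum in *; simpl; [lra|].
  apply Rplus_le_compat; [apply H; left; reflexivity|apply IH; intros; apply H; right; auto].
Qed.

Lemma lsum_abs {X} (g : X -> R) l : Rabs (lsum g l) <= lsum (fun x => Rabs (g x)) l.
Proof.
  induction l as [|a l IH]; unfold lsum in *; simpl; [rewrite Rabs_R0; lra|].
  eapply Rle_trans; [apply Rabs_triang|]; lra.
Qed.

Lemma lsum_psum {X} (F : X -> nat -> R) l N :
  lsum (fun u => psum (F u) N) l = psum (fun k => lsum (fun u => F u k) l) N.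
Proof.
  induction l as [|a l IH]; unfold lsum in *; simpl.
  - induction N as [|N IHN]; simpl; [reflexivity|]; rewrite <- IHN; ring.
  - rewrite IH, <- psum_plus; reflexivity.
Qed.

Lemma Un_cv_const c : Un_cv (fun _ => c) c.
Proof. intros e He; exists O; intros; unfold R_dist; rewrite Rminus_diag, Rabs_R0; lra. Qed.

Lemma Un_cv_pow_lt_1 t : 0 <= t < 1 -> Un_cv (fun n => t ^ n) 0.
Proof.
  intros Ht e He; destruct (pow_lt_1_zero t) with e as [N HN]; [rewrite Rabs_right; lra|lra|].
  exists N; intros n Hn; unfold R_dist; rewrite Rminus_0_r; apply HN; lia.
Qed.

Lemma Un_cv_squeeze0 a b : Un_cv b 0 -> (forall j, Rabs (a j) <= b j) -> Un_cv a 0.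
Proof.
  intros Hb H eps He; destruct (Hb eps He) as [N HN]; exists N; intros n Hn.
  specialize (HN n Hn); specialize (H n); unfold R_dist in *; rewrite Rminus_0_r in *.
  apply Rabs_def2 in HN; lra.
Qed.

Lemma lsum_cv {X} (a : nat -> X -> R) (m : X -> R) l :
  (forall u, Un_cv (fun j => a j u) (m u)) -> Un_cv (fun j => lsum (a j) l) (lsum m l).
Proof.
  intros H; induction l as [|u l IH]; unfold lsum in *; simpl.
  - apply Un_cv_const.
  - apply CV_plus; [apply H|exact IH].
Qed.

Lemma infinite_sum_tail f s : infinite_sum f s -> infinite_sum (fun n => f (S n)) (s - f O).
Proof.
  intros H eps Heps; destruct (H eps Heps) as [N HN]; exists N; intros n Hn.
  pose proof (decomp_sum f (S n) ltac:(lia)) as Hd; simpl pred in Hd.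
  specialize (HN (S n) ltac:(lia)); rewrite Hd in HN; unfold R_dist in *.
  replace (sum_f_R0 (fun i => f (S i)) n - (s - f O))
    with (f O + sum_f_R0 (fun i => f (S i)) n - s) by ring.
  exact HN.
Qed.

Lemma infinite_sum_terms_lt g s c : infinite_sum g s -> 0 < c ->
  exists N0, forall n, (N0 <= n)%nat -> g n < c.
Proof.
  intros Hs Hc; destruct (Hs (c / 2)) as [N HN]; [lra|].
  exists (S N); intros [|n] Hn; [lia|].
  pose proof (HN n ltac:(lia)) as H1; pose proof (HN (S n) ltac:(lia)) as H2.
  unfold R_dist in *; simpl in H2; apply Rabs_def2 in H1; apply Rabs_def2 in H2; lra.
Qed.

(** * Optimal pairs *)

Section DualSums.

Variables Astar Vstar : Sigma -> R.

Lemma Istar_shift w s : Istar_is Astar Vstar w s ->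
  Istar_is Astar Vstar (shift w) (s - Rstar Astar Vstar w).
Proof.
  intros H; unfold Istar_is in *.
  apply infinite_sum_tail in H.
  replace (fun n => Rstar Astar Vstar (shiftn n (shift w)))
    with (fun n => Rstar Astar Vstar (shiftn (S n) w)); [exact H|].
  apply functional_extensionality; intro n; rewrite shiftn_shift; reflexivity.
Qed.

Lemma Istar_shiftn w s N : Istar_is Astar Vstar w s ->
  Istar_is Astar Vstar (shiftn N w) (s - psum (fun k => Rstar Astar Vstar (shiftn k w)) N).
Proof.
  intros H; induction N as [|N IH]; simpl psum.
  - rewrite Rminus_0_r; exact H.
  - replace (s - (psum (fun k => Rstar Astar Vstar (shiftn k w)) N + Rstar Astar Vstar (shiftn N w)))
      with (s - psum (fun k => Rstar Astar Vstar (shiftn k w)) N - Rstar Astar Vstar (shiftn N w))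
      by ring.
    exact (Istar_shift _ _ IH).
Qed.

Lemma birkhoff_telescope w N :
  psum (fun k => Astar (shiftn k w)) N =
  Vstar (shiftn N w) - Vstar w - psum (fun k => Rstar Astar Vstar (shiftn k w)) N.
Proof.
  induction N as [|N IH]; simpl psum; [simpl; ring|].
  rewrite IH; unfold Rstar; change (shiftn (S N) w) with (shift (shiftn N w)); ring.
Qed.

End DualSums.

Lemma holder2_oscillation W : holder2 W -> exists C, forall a b a' b', W a' b' - C <= W a b.
Proof.
  intros [C [t [_ H]]]; exists (C * (1 + 1)); intros a b a' b'.
  specialize (H O O a' a b' b ltac:(intros i Hi; lia) ltac:(intros i Hi; lia)); simpl in H.
  apply Rabs_le_between in H; lra.
Qed.

Section OptimalPairs.

Variables (A Astar V Vstar : Sigma -> R) (W : Sigma -> Sigma -> R).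
Hypothesis HW : involution_kernel A Astar W.
Hypothesis HWnorm : V_sup_formula Astar V Vstar W.

(* b(tau_w x, sigma w) = b(x, w) + V(tau_w x) + A(tau_w x) - V(x) <= b(x, w) since V is a
   subaction, while b >= 0 by the sup formula. *)
Lemma optimal_pair_hatTinv x w : calibrated A V ->
  optimal_pair Astar V Vstar W x w -> optimal_pair Astar V Vstar W (tau w x) (shift w).
Proof.
  intros [_ [HV _]] [s [Hs Hb]].
  pose proof (Istar_shift _ _ _ _ Hs) as Hs'.
  exists (s - Rstar Astar Vstar w); split; [exact Hs'|].
  specialize (HV (tau w x)); change (shift (tau w x)) with x in HV.
  pose proof (proj2 HW w x) as HWwx.
  assert (Hsup : W (shift w) (tau w x) - Vstar (shift w) - (s - Rstar Astar Vstar w)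
                 <= V (tau w x)) by (apply (proj1 (HWnorm (tau w x))); eauto).
  unfold Rstar in *; lra.
Qed.

Lemma optimal_pair_hatTinvn x w k : calibrated A V ->
  optimal_pair Astar V Vstar W x w ->
  optimal_pair Astar V Vstar W (fst (hatTinvn k (x, w))) (snd (hatTinvn k (x, w))).
Proof.
  intros HV H; induction k as [|k IH]; [exact H|].
  change (hatTinvn (S k) (x, w)) with (hatTinv (hatTinvn k (x, w))).
  exact (optimal_pair_hatTinv _ _ HV IH).
Qed.

(* Telescoping against I*(sigma^N w) = I*(w) - sum_{k<N} R*(sigma^k w), the sup formula at x
   gives S_N A*(w) >= W(sigma^N w, x) - V(x) - I*(w) - V*(w); and W has bounded oscillation. *)
Lemma optimal_birkhoff_bounded_below x w :
  optimal_pair Astar V Vstar W x w ->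
  exists K, forall N, - K <= psum (fun k => Astar (shiftn k w)) N.
Proof.
  intros [s [Hs _]].
  destruct (holder2_oscillation W (proj1 HW)) as [C HC].
  exists (V x + s + Vstar w + C - W w x); intro N.
  rewrite (birkhoff_telescope Astar Vstar).
  pose proof (Istar_shiftn _ _ _ _ N Hs) as HsN.
  assert (Hsup : W (shiftn N w) x - Vstar (shiftn N w)
                 - (s - psum (fun k => Rstar Astar Vstar (shiftn k w)) N) <= V x)
    by (apply (proj1 (HWnorm x)); eauto).
  pose proof (HC (shiftn N w) x w x).
  lra.
Qed.

End OptimalPairs.

Fixpoint prefb (u : list bool) (y : Sigma) : bool :=
  match u with
  | [] => true
  | b :: u' => andb (Bool.eqb b (y O)) (prefb u' (shift y))
  end.

Definition cyl_ind (u : list bool) (y : Sigma) : R := if prefb u y then 1 else 0.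

Lemma prefb_app u b y : prefb (u ++ [b]) y = andb (prefb u y) (Bool.eqb b (y (length u))).
Proof.
  revert y; induction u as [|a u IH]; intro y; simpl.
  - destruct (Bool.eqb b (y O)); reflexivity.
  - rewrite IH, Bool.andb_assoc; reflexivity.
Qed.

Lemma cyl_ind_bounds u y : 0 <= cyl_ind u y <= 1.
Proof. unfold cyl_ind; destruct (prefb u y); lra. Qed.

Lemma cyl_ind_split u y : cyl_ind u y = cyl_ind (u ++ [false]) y + cyl_ind (u ++ [true]) y.
Proof.
  unfold cyl_ind; rewrite !prefb_app.
  destruct (prefb u y), (y (length u)); simpl; ring.
Qed.

Lemma cyl_ind_preimage u y : cyl_ind (false :: u) y + cyl_ind (true :: u) y = cyl_ind u (shift y).
Proof. unfold cyl_ind; simpl; destruct (y O), (prefb u (shift y)); simpl; ring. Qed.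

Lemma prefix_S n y : prefix (S n) y = prefix n y ++ [y n].
Proof. unfold prefix; rewrite seq_S, map_app; reflexivity. Qed.

Lemma prefix_length n y : length (prefix n y) = n.
Proof. unfold prefix; rewrite length_map, length_seq; reflexivity. Qed.

Lemma prefb_prefix_agree L z y : prefb (prefix L z) y = true -> agree L z y.
Proof.
  induction L as [|L IH]; intros H i Hi; [lia|].
  rewrite prefix_S, prefb_app, prefix_length in H; apply andb_prop in H as [H1 H2].
  destruct (Nat.eq_dec i L) as [->|Hne]; [exact (Bool.eqb_prop _ _ H2)|].
  apply (IH H1); lia.
Qed.

Lemma ext_prefix_agree n y : agree n (ext (prefix n y)) y.
Proof.
  intros i Hi; unfold ext, prefix.
  rewrite (nth_indep _ false (y O)) by (rewrite length_map, length_seq; lia).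
  rewrite map_nth, seq_nth by lia; reflexivity.
Qed.

Lemma ext_app_agree u b : agree (length u) (ext (u ++ [b])) (ext u).
Proof. intros i Hi; unfold ext; apply app_nth1; exact Hi. Qed.

Lemma words_S n : words (S n) = flat_map (fun u => [u ++ [false]; u ++ [true]]) (words n).
Proof. reflexivity. Qed.

Lemma words_length n u : In u (words n) -> length u = n.
Proof.
  revert u; induction n as [|n IH]; intros u Hu.
  - destruct Hu as [<-|[]]; reflexivity.
  - rewrite words_S in Hu; apply in_flat_map in Hu as [v [Hv Hu]].
    destruct Hu as [<-|[<-|[]]]; rewrite length_app, (IH v Hv); simpl; lia.
Qed.

Lemma lsum_words_cyl_ind n y g :
  lsum (fun u => cyl_ind u y * g u) (words n) = g (prefix n y).
Proof.
  revert g; induction n as [|n IH]; intro g; [unfold lsum, cyl_ind, prefix; simpl; ring|].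
  rewrite words_S, lsum_flat_map, prefix_S, <- (IH (fun u => g (u ++ [y n]))).
  apply lsum_ext_in; intros u Hu; unfold lsum, cyl_ind; simpl.
  rewrite !prefb_app, (words_length n u Hu).
  destruct (prefb u y), (y n); simpl; ring.
Qed.

Lemma lsum_words_prob mu n : is_prob mu -> lsum mu (words n) = 1.
Proof.
  intros [H0 [_ Hsplit]]; induction n as [|n IH]; [unfold lsum; simpl; rewrite H0; ring|].
  rewrite words_S, lsum_flat_map, <- IH; apply lsum_ext_in.
  intros u _; unfold lsum; simpl; rewrite (Hsplit u); ring.
Qed.

Lemma riemann_sum_lsum mu f n :
  riemann_sum mu f n = lsum (fun u => mu u * f (ext u)) (words n).
Proof. reflexivity. Qed.

Definition holder_with (C theta : R) (f : Sigma -> R) : Prop :=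
  forall n x y, agree n x y -> Rabs (f x - f y) <= C * theta ^ n.

Lemma holder_with_bounded C t f y : holder_with C t f -> Rabs (f y) <= Rabs (f (fun _ => false)) + C.
Proof.
  intros Hf; specialize (Hf O y (fun _ => false) ltac:(intros i Hi; lia)); simpl in Hf.
  pose proof (Rabs_triang_inv (f y) (f (fun _ => false))); lra.
Qed.

Lemma holder_with_nonneg C t f : holder_with C t f -> 0 <= C.
Proof.
  intros Hf; specialize (Hf O (fun _ => false) (fun _ => false) ltac:(intros i Hi; lia)).
  simpl in Hf; rewrite Rminus_diag, Rabs_R0 in Hf; lra.
Qed.

Section RiemannSums.

Variables (mu : list bool -> R) (f : Sigma -> R) (C t : R).
Hypothesis Hmu : is_prob mu.
Hypothesis Hf : holder_with C t f.

Lemma riemann_sum_step n :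
  Rabs (riemann_sum mu f (S n) - riemann_sum mu f n) <= C * t ^ n.
Proof.
  destruct Hmu as [_ [Hpos Hsplit]].
  set (D u := lsum (fun b => mu (u ++ [b]) * (f (ext (u ++ [b])) - f (ext u))) [false; true]).
  assert (HD : riemann_sum mu f (S n) - riemann_sum mu f n = lsum D (words n)).
  { rewrite !riemann_sum_lsum, words_S, lsum_flat_map.
    apply (Rplus_eq_reg_r (lsum (fun u => mu u * f (ext u)) (words n))).
    rewrite <- lsum_plus; ring_simplify; apply lsum_ext_in; intros u _.
    unfold D, lsum; simpl; rewrite (Hsplit u); ring. }
  rewrite HD; eapply Rle_trans; [apply lsum_abs|].
  apply Rle_trans with (lsum (fun u => C * t ^ n * mu u) (words n)).
  - apply lsum_le; intros u Hu; unfold D.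
    eapply Rle_trans; [apply lsum_abs|].
    apply Rle_trans with (lsum (fun b => C * t ^ n * mu (u ++ [b])) [false; true]).
    + apply lsum_le; intros b _.
      rewrite Rabs_mult, (Rabs_right (mu _)) by (apply Rle_ge, Hpos).
      rewrite Rmult_comm; apply Rmult_le_compat_r; [apply Hpos|].
      apply Hf; rewrite <- (words_length n u Hu); apply ext_app_agree.
    + rewrite lsum_mult_l, (Hsplit u); unfold lsum; simpl; lra.
  - rewrite lsum_mult_l, lsum_words_prob by exact Hmu; lra.
Qed.

Lemma riemann_sum_bounded n : riemann_sum mu f n <= Rabs (f (fun _ => false)) + C.
Proof.
  pose proof (proj1 (proj2 Hmu)) as Hpos.
  rewrite riemann_sum_lsum.
  apply Rle_trans with (lsum (fun u => (Rabs (f (fun _ => false)) + C) * mu u) (words n)).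
  - apply lsum_le; intros u _; rewrite (Rmult_comm (mu u)).
    apply Rmult_le_compat_r; [apply Hpos|].
    pose proof (holder_with_bounded C t f (ext u) Hf); pose proof (Rle_abs (f (ext u))); lra.
  - rewrite lsum_mult_l, lsum_words_prob by exact Hmu; lra.
Qed.

(* The sums become nondecreasing after subtracting C t^n / (1 - t), and they are bounded. *)
Lemma riemann_sum_converges : 0 < t < 1 -> exists l, integral mu f l.
Proof.
  intros Ht; pose proof (holder_with_nonneg C t f Hf) as HC.
  set (g n := riemann_sum mu f n - C / (1 - t) * t ^ n).
  assert (Hg : Un_growing g).
  { intro n; unfold g; pose proof (Rabs_le_between _ _ (riemann_sum_step n)); simpl pow.
    assert (C / (1 - t) * t ^ n - C / (1 - t) * (t * t ^ n) = C * t ^ n) by (field; lra).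
    lra. }
  assert (Hub : has_ub g).
  { exists (Rabs (f (fun _ => false)) + C); intros r [n ->]; unfold g.
    pose proof (riemann_sum_bounded n).
    assert (0 <= C / (1 - t) * t ^ n).
    { apply Rmult_le_pos; [|apply pow_le; lra].
      apply Rmult_le_pos; [lra|apply Rlt_le, Rinv_0_lt_compat; lra]. }
    lra. }
  destruct (growing_cv g Hg Hub) as [l Hl]; exists l; unfold integral.
  replace l with (l + C / (1 - t) * 0) by ring.
  apply (Un_cv_ext (fun n => g n + C / (1 - t) * t ^ n)); [intro n; unfold g; ring|].
  apply CV_plus; [exact Hl|].
  apply CV_mult; [apply Un_cv_const|apply Un_cv_pow_lt_1; lra].
Qed.

End RiemannSums.

(** * Diagonal extraction *)

Definition increasing (f : nat -> nat) : Prop := forall j, (f j < f (S j))%nat.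

Lemma increasing_lt f i j : increasing f -> (i < j)%nat -> (f i < f j)%nat.
Proof. intros Hf Hij; induction Hij; [apply Hf|specialize (Hf m); lia]. Qed.

Lemma increasing_ge f j : increasing f -> (j <= f j)%nat.
Proof. intros Hf; induction j as [|j IH]; [lia|specialize (Hf j); lia]. Qed.

Lemma unit_sequence_cv_subsequence (b : nat -> R) : (forall n, 0 <= b n <= 1) ->
  exists chi, increasing chi /\ exists l, Un_cv (fun j => b (chi j)) l.
Proof.
  intros Hb.
  destruct (Rtopology.Bolzano_Weierstrass b (fun r => 0 <= r <= 1)
              (Rtopology.compact_P3 0 1) Hb) as [l Hl].
  assert (Hnear : forall k N, exists p, (N <= p)%nat /\ Rabs (b p - l) < / INR (S k)).
  { intros k N.
    assert (Hk : 0 < / INR (S k)) by (apply Rinv_0_lt_compat, lt_0_INR; lia).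
    destruct (Hl (fun r => Rabs (r - l) < / INR (S k)) N) as [p Hp]; [|exists p; exact Hp].
    exists (mkposreal _ Hk); intros r Hr; exact Hr. }
  destruct (choice (fun k : nat => fun pick : nat -> nat => forall N,
             (N <= pick N)%nat /\ Rabs (b (pick N) - l) < / INR (S k))) as [pick Hpick].
  { intro k; apply (choice (fun N p => (N <= p)%nat /\ Rabs (b p - l) < / INR (S k))), Hnear. }
  set (chi := fix chi j := match j with O => pick O O | S j' => pick (S j') (S (chi j')) end).
  assert (Hchi : forall j, Rabs (b (chi j) - l) < / INR (S j)) by (intros [|j]; apply Hpick).
  exists chi; split; [intro j; simpl; destruct (Hpick (S j) (S (chi j))); lia|].
  exists l; intros eps Heps.
  destruct (archimed_cor1 eps Heps) as [k [Hk Hk0]]; exists k; intros j Hj; unfold R_dist.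
  assert (0 < INR k) by (apply lt_0_INR; lia).
  assert (INR k <= INR (S j)) by (apply le_INR; lia).
  assert (/ INR (S j) <= / INR k) by (apply Rinv_le_contravar; lra).
  specialize (Hchi j); lra.
Qed.

Section Diagonal.

Variable a : nat -> nat -> R.
Hypothesis Ha : forall N c, 0 <= a N c <= 1.

Lemma refinement_exists (psi : nat -> nat) (c : nat) :
  exists chi, increasing chi /\ exists l, Un_cv (fun j => a (psi (chi j)) c) l.
Proof. apply (unit_sequence_cv_subsequence (fun n => a (psi n) c)); intro; apply Ha. Qed.

Definition refinement (psi : nat -> nat) (c : nat) : nat -> nat :=
  proj1_sig (constructive_indefinite_description _ (refinement_exists psi c)).

Lemma refinement_spec psi c : increasing (refinement psi c) /\
  exists l, Un_cv (fun j => a (psi (refinement psi c j)) c) l.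
Proof. exact (proj2_sig (constructive_indefinite_description _ (refinement_exists psi c))). Qed.

(* [stage c] is a subsequence along which [a _ c'] converges for every [c' < c]. *)
Fixpoint stage (c : nat) : nat -> nat :=
  match c with
  | O => fun j => j
  | S c' => fun j => stage c' (refinement (stage c') c' j)
  end.

Lemma stage_increasing c : increasing (stage c).
Proof.
  induction c as [|c IH]; intro j; simpl; [lia|].
  apply (increasing_lt _ _ _ IH), (proj1 (refinement_spec (stage c) c)).
Qed.

Lemma stage_factor c d i : exists m, (i <= m)%nat /\ stage (S c + d) i = stage (S c) m.
Proof.
  revert i; induction d as [|d IH]; intro i; [exists i; split; [lia|f_equal; lia]|].
  replace (S c + S d)%nat with (S (S c + d)) by lia.
  destruct (IH (refinement (stage (S c + d)) (S c + d) i)) as [m [Hm Hm']].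
  exists m; split; [|exact Hm'].
  pose proof (increasing_ge _ i (proj1 (refinement_spec (stage (S c + d)) (S c + d)))); lia.
Qed.

Lemma diagonal_extraction : exists phi : nat -> nat, (forall j, (j <= phi j)%nat) /\
  forall c, exists l, Un_cv (fun j => a (phi j) c) l.
Proof.
  exists (fun j => stage (S j) j); split; [intro j; apply increasing_ge, stage_increasing|].
  intro c; destruct (proj2 (refinement_spec (stage c) c)) as [l Hl]; exists l.
  intros eps Heps; destruct (Hl eps Heps) as [N HN]; exists (N + S c)%nat; intros j Hj.
  destruct (stage_factor c (j - c) j) as [m [Hm Hm']].
  replace (S c + (j - c))%nat with (S j) in Hm' by lia.
  rewrite Hm'; apply HN; lia.
Qed.

End Diagonal.

Fixpoint pos_of_word (u : list bool) : positive :=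
  match u with
  | [] => xH
  | b :: u' => if b then xI (pos_of_word u') else xO (pos_of_word u')
  end.

Fixpoint word_of_pos (p : positive) : list bool :=
  match p with
  | xH => []
  | xI q => true :: word_of_pos q
  | xO q => false :: word_of_pos q
  end.

Lemma word_of_nat_surjective u : exists c, word_of_pos (Pos.of_nat c) = u.
Proof.
  exists (Pos.to_nat (pos_of_word u)); rewrite Pos2Nat.id.
  induction u as [|[|] u IH]; simpl; congruence.
Qed.

Lemma diagonal_extraction_words (a : nat -> list bool -> R) :
  (forall N u, 0 <= a N u <= 1) -> exists phi : nat -> nat, (forall j, (j <= phi j)%nat) /\
  forall u, exists l, Un_cv (fun j => a (phi j) u) l.
Proof.
  intros Ha.
  destruct (diagonal_extraction (fun N c => a N (word_of_pos (Pos.of_nat c)))) as [phi [Hphi Hcv]];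
    [intros; apply Ha|].
  exists phi; split; [exact Hphi|]; intro u.
  destruct (word_of_nat_surjective u) as [c <-]; apply Hcv.
Qed.

(** * Empirical measures *)

Definition empirical (w : Sigma) (N : nat) (u : list bool) : R :=
  psum (fun k => cyl_ind u (shiftn k w)) N / INR N.

Lemma empirical_bounds w N u : 0 <= empirical w (S N) u <= 1.
Proof.
  unfold empirical.
  pose proof (psum_unit_bounds (fun k => cyl_ind u (shiftn k w)) (S N) (fun k => cyl_ind_bounds _ _)).
  assert (0 < INR (S N)) by (apply lt_0_INR; lia).
  split; [apply Rmult_le_pos; [lra|apply Rlt_le, Rinv_0_lt_compat; lra]|].
  apply Rmult_le_reg_r with (INR (S N)); [lra|].
  unfold Rdiv; rewrite Rmult_assoc, Rinv_l; lra.
Qed.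

Lemma empirical_nil w N : empirical w (S N) [] = 1.
Proof.
  unfold empirical; change (psum (fun k => cyl_ind [] (shiftn k w)) (S N)) with (psum (fun _ => 1) (S N)).
  rewrite psum_const; field; apply not_0_INR; lia.
Qed.

Lemma empirical_split w N u :
  empirical w N u = empirical w N (u ++ [false]) + empirical w N (u ++ [true]).
Proof.
  unfold empirical, Rdiv; rewrite <- Rmult_plus_distr_r, <- psum_plus; f_equal.
  apply psum_ext; intros; apply cyl_ind_split.
Qed.

Lemma empirical_shift_defect w N u :
  empirical w N (false :: u) + empirical w N (true :: u) - empirical w N u =
  (cyl_ind u (shiftn N w) - cyl_ind u w) / INR N.
Proof.
  unfold empirical, Rdiv; rewrite <- Rmult_plus_distr_r, <- psum_plus.
  rewrite (psum_ext _ (fun k => cyl_ind u (shiftn (S k) w))) by (intros; apply cyl_ind_preimage).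
  rewrite (psum_shift (fun k => cyl_ind u (shiftn k w))); simpl; ring.
Qed.

Lemma riemann_sum_empirical w N f n : riemann_sum (empirical w N) f n =
  psum (fun k => f (ext (prefix n (shiftn k w)))) N / INR N.
Proof.
  rewrite riemann_sum_lsum; unfold empirical, Rdiv.
  rewrite (lsum_ext_in _ (fun u => / INR N * psum (fun k => cyl_ind u (shiftn k w) * f (ext u)) N))
    by (intros; rewrite psum_mult_r; ring).
  rewrite lsum_mult_l, lsum_psum, Rmult_comm; f_equal.
  apply psum_ext; intros; apply lsum_words_cyl_ind.
Qed.

Section EmpiricalLimit.

Variables (w : Sigma) (phi : nat -> nat) (mu : list bool -> R).
Hypothesis Hphi : forall j, (j <= phi j)%nat.
Hypothesis Hcv : forall u, Un_cv (fun j => empirical w (S (phi j)) u) (mu u).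

Lemma Un_cv_inv_subsequence C : Un_cv (fun j => C / INR (S (phi j))) 0.
Proof.
  replace 0 with (C * 0) by ring; apply CV_mult; [apply Un_cv_const|].
  intros eps He; destruct (archimed_cor1 eps He) as [N [HN HN0]]; exists N; intros j Hj.
  unfold R_dist; rewrite Rminus_0_r.
  assert (0 < INR N) by (apply lt_0_INR; lia).
  assert (INR N <= INR (S (phi j))) by (apply le_INR; specialize (Hphi j); lia).
  assert (0 < / INR (S (phi j))) by (apply Rinv_0_lt_compat; lra).
  assert (/ INR (S (phi j)) <= / INR N) by (apply Rinv_le_contravar; lra).
  rewrite Rabs_right; lra.
Qed.

Lemma empirical_limit_prob : is_prob mu.
Proof.
  split; [|split].
  - apply (UL_sequence _ _ _ (Hcv [])).
    apply (Un_cv_ext (fun _ => 1)); [intro; rewrite empirical_nil; reflexivity|apply Un_cv_const].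
  - intro u; exact (Rle_cv_lim (fun j => proj1 (empirical_bounds w (phi j) u))
                      (Un_cv_const 0) (Hcv u)).
  - intro u; apply (UL_sequence _ _ _ (Hcv u)).
    apply (Un_cv_ext (fun j => empirical w (S (phi j)) (u ++ [false])
                               + empirical w (S (phi j)) (u ++ [true])));
      [intro; rewrite <- empirical_split; reflexivity|apply CV_plus; apply Hcv].
Qed.

(* The shift defect of the N-th empirical measure is O(1/N). *)
Lemma empirical_limit_invariant : is_invariant mu.
Proof.
  split; [exact empirical_limit_prob|]; intro u.
  assert (Hd : Un_cv (fun j => empirical w (S (phi j)) (false :: u)
                     + empirical w (S (phi j)) (true :: u) - empirical w (S (phi j)) u) 0).
  { apply (Un_cv_squeeze0 _ _ (Un_cv_inv_subsequence 1)); intro j.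
    rewrite empirical_shift_defect; unfold Rdiv.
    assert (0 < / INR (S (phi j))) by (apply Rinv_0_lt_compat, lt_0_INR; lia).
    rewrite Rabs_mult, (Rabs_right (/ _)) by lra.
    apply Rmult_le_compat_r; [lra|].
    pose proof (cyl_ind_bounds u (shiftn (S (phi j)) w)); pose proof (cyl_ind_bounds u w).
    apply Rabs_le; lra. }
  pose proof (UL_sequence _ _ _ Hd (CV_minus _ _ _ _ (CV_plus _ _ _ _ (Hcv _) (Hcv _)) (Hcv u))).
  lra.
Qed.

Lemma empirical_limit_null u n0 :
  (forall n, (n0 <= n)%nat -> cyl_ind u (shiftn n w) = 0) -> mu u = 0.
Proof.
  intros Hz; apply (UL_sequence _ _ _ (Hcv u)).
  apply (Un_cv_squeeze0 _ _ (Un_cv_inv_subsequence (INR n0))); intro j.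
  pose proof (empirical_bounds w (phi j) u) as Hb; rewrite Rabs_right by lra.
  unfold empirical, Rdiv; apply Rmult_le_compat_r;
    [apply Rlt_le, Rinv_0_lt_compat, lt_0_INR; lia|].
  exact (psum_unit_finite_support _ n0 _ (fun k => cyl_ind_bounds _ _) Hz).
Qed.

(* Replacing f by its value on a cylinder costs C t^n, and Birkhoff averages of f are
   bounded below by - K / N. *)
Lemma empirical_limit_riemann_sum_ge f C t K n : holder_with C t f ->
  (forall N, - K <= psum (fun k => f (shiftn k w)) N) -> - (C * t ^ n) <= riemann_sum mu f n.
Proof.
  intros Hf HK.
  assert (Hc : Un_cv (fun j => riemann_sum (empirical w (S (phi j))) f n + K / INR (S (phi j)))
                     (riemann_sum mu f n + 0))
    by (apply CV_plus; [apply lsum_cv; intro u; apply CV_mult; [apply Hcv|apply Un_cv_const]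
                       |apply Un_cv_inv_subsequence]).
  rewrite Rplus_0_r in Hc; eapply Rle_cv_lim; [|apply Un_cv_const|exact Hc]; intro j; cbv beta.
  rewrite riemann_sum_empirical; set (N := S (phi j)).
  assert (HN : 0 < INR N) by (apply lt_0_INR; unfold N; lia).
  assert (Hs : psum (fun k => f (shiftn k w) + - (C * t ^ n)) N <=
               psum (fun k => f (ext (prefix n (shiftn k w)))) N).
  { apply psum_le; intros k _.
    pose proof (Rabs_le_between _ _ (Hf n _ _ (ext_prefix_agree n (shiftn k w)))); lra. }
  rewrite psum_plus, psum_const in Hs; specialize (HK N).
  apply Rmult_le_reg_r with (INR N); [lra|].
  unfold Rdiv; rewrite Rmult_plus_distr_r, !Rmult_assoc, Rinv_l by lra; lra.
Qed.

End EmpiricalLimit.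

(* The measure is a limit of the empirical measures of w along a diagonal subsequence. *)
Lemma krylov_bogolyubov f w C t K : 0 < t < 1 -> holder_with C t f ->
  (forall N, - K <= psum (fun k => f (shiftn k w)) N) ->
  exists mu, is_invariant mu /\ (exists l, integral mu f l /\ 0 <= l) /\
    forall L z n0, (forall n, (n0 <= n)%nat -> ~ agree L z (shiftn n w)) -> mu (prefix L z) = 0.
Proof.
  intros Ht Hf HK.
  destruct (diagonal_extraction_words (fun N u => empirical w (S N) u)) as [phi [Hphi Hlim]];
    [intros; apply empirical_bounds|].
  destruct (choice (fun u l => Un_cv (fun j => empirical w (S (phi j)) u) l) Hlim) as [mu Hcv].
  pose proof (empirical_limit_invariant w phi mu Hphi Hcv) as Hinv.
  exists mu; split; [exact Hinv|split].
  - destruct (riemann_sum_converges mu f C t (proj1 Hinv) Hf Ht) as [l Hl].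
    exists l; split; [exact Hl|].
    assert (Hl' : Un_cv (fun n => riemann_sum mu f n + C * t ^ n) (l + C * 0))
      by (apply CV_plus; [exact Hl|apply CV_mult; [apply Un_cv_const|apply Un_cv_pow_lt_1; lra]]).
    rewrite Rmult_0_r, Rplus_0_r in Hl'.
    apply (Rle_cv_lim (Un := fun _ => 0)) with (2 := Un_cv_const 0) (3 := Hl'); intro n.
    pose proof (empirical_limit_riemann_sum_ge w phi mu Hphi Hcv f C t K n Hf HK); lra.
  - intros L z n0 Hfar; apply (empirical_limit_null w phi mu Hphi Hcv _ n0); intros n Hn.
    unfold cyl_ind; destruct (prefb (prefix L z) (shiftn n w)) eqn:E; [|reflexivity].
    exfalso; exact (Hfar n Hn (prefb_prefix_agree _ _ _ E)).
Qed.

Lemma holder_with_add C1 C2 t f g : holder_with C1 t f -> holder_with C2 t g ->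
  holder_with (C1 + C2) t (fun y => f y + g y).
Proof.
  intros Hf Hg n x y Hxy; specialize (Hf n x y Hxy); specialize (Hg n x y Hxy).
  replace (f x + g x - (f y + g y)) with ((f x - f y) + (g x - g y)) by ring.
  eapply Rle_trans; [apply Rabs_triang|lra].
Qed.

Lemma holder_with_opp C t f : holder_with C t f -> holder_with C t (fun y => - f y).
Proof.
  intros Hf n x y Hxy; replace (- f x - - f y) with (- (f x - f y)) by ring.
  rewrite Rabs_Ropp; apply Hf, Hxy.
Qed.

Lemma holder_with_weaken C C' t t' f : 0 <= t <= t' -> C <= C' ->
  holder_with C t f -> holder_with C' t' f.
Proof.
  intros Ht HC Hf n x y Hxy; pose proof (holder_with_nonneg C t f Hf).
  assert (t ^ n <= t' ^ n) by (apply pow_incr; lra).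
  assert (0 <= t ^ n) by (apply pow_le; lra).
  eapply Rle_trans; [apply Hf, Hxy|]; nra.
Qed.

Lemma holder_with_ext C t f g : (forall y, f y = g y) -> holder_with C t f -> holder_with C t g.
Proof. intros E Hf n x y; rewrite <- !E; apply Hf. Qed.

Lemma pow_pred_le t n : 0 < t <= 1 -> t ^ pred n <= t ^ n / t.
Proof.
  intros Ht; destruct n as [|n]; simpl.
  - apply Rmult_le_reg_r with t; [lra|]; unfold Rdiv; rewrite Rmult_assoc, Rinv_l; lra.
  - unfold Rdiv; rewrite (Rmult_comm t), Rmult_assoc, Rinv_r, Rmult_1_r by lra; lra.
Qed.

Section DualPotential.

Variables (A Astar : Sigma -> R) (W : Sigma -> Sigma -> R).
Variables (CW tW : R).
Hypothesis HtW : 0 < tW < 1.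
Hypothesis HWh : forall n m w w' x x', agree n w w' -> agree m x x' ->
  Rabs (W w x - W w' x') <= CW * (tW ^ n + tW ^ m).

Let x0 : Sigma := fun _ => false.

Lemma agree_tau n w w' x : agree n w w' -> agree n (tau w x) (tau w' x).
Proof. intros H [|i] Hi; [apply H, Hi|reflexivity]. Qed.

Lemma holder_with_W_tau : holder_with (2 * CW / tW) tW (fun y => W (shift y) (tau y x0)).
Proof.
  intros n y y' Hyy'.
  assert (Hs : agree (pred n) (shift y) (shift y')) by (intros i Hi; apply Hyy'; lia).
  eapply Rle_trans; [exact (HWh _ _ _ _ _ _ Hs (agree_tau _ _ _ x0 Hyy'))|].
  assert (0 <= CW).
  { specialize (HWh O O x0 x0 x0 x0 ltac:(intros i Hi; lia) ltac:(intros i Hi; lia)).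
    simpl in HWh; rewrite Rminus_diag, Rabs_R0 in HWh; lra. }
  pose proof (pow_pred_le tW n ltac:(lra)).
  assert (tW ^ n <= tW ^ n / tW).
  { unfold Rdiv; rewrite <- (Rmult_1_r (tW ^ n)) at 1.
    apply Rmult_le_compat_l; [apply pow_le; lra|].
    rewrite <- Rinv_1; apply Rinv_le_contravar; lra. }
  replace (2 * CW / tW * tW ^ n) with (CW * (tW ^ n / tW + tW ^ n / tW)) by (field; lra).
  apply Rmult_le_compat_l; lra.
Qed.

Lemma holder_with_W_left : holder_with (2 * CW) tW (fun y => W y x0).
Proof.
  intros n y y' Hyy'.
  replace (2 * CW * tW ^ n) with (CW * (tW ^ n + tW ^ n)) by ring.
  apply HWh; [exact Hyy'|intros i Hi; reflexivity].
Qed.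

Lemma holder_with_dual_potential CA tA : 0 < tA < 1 -> holder_with CA tA A ->
  (forall w x, Astar w = A (tau w x) + W (shift w) (tau w x) - W w x) ->
  holder_with (CA + 2 * CW / tW + 2 * CW) (Rmax tA tW) Astar.
Proof.
  intros HtA HA HW.
  pose proof (Rmax_l tA tW); pose proof (Rmax_r tA tW).
  assert (HA' : holder_with CA tA (fun y => A (tau y x0)))
    by (intros n y y' Hyy'; apply HA, agree_tau, Hyy').
  apply holder_with_ext with (f := fun y => A (tau y x0) + W (shift y) (tau y x0) + - W y x0);
    [intro y; rewrite (HW y x0); ring|].
  apply holder_with_add; [apply holder_with_add|apply holder_with_opp].
  - apply (holder_with_weaken CA _ tA); [lra|lra|exact HA'].
  - apply (holder_with_weaken (2 * CW / tW) _ tW); [lra|lra|exact holder_with_W_tau].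
  - apply (holder_with_weaken (2 * CW) _ tW); [lra|lra|exact holder_with_W_left].
Qed.

End DualPotential.

Lemma holder_dual_potential A Astar W : holder A -> involution_kernel A Astar W ->
  exists C t, 0 < t < 1 /\ holder_with C t Astar.
Proof.
  intros [CA [tA [HtA HA]]] [[CW [tW [HtW HWh]]] HW].
  exists (CA + 2 * CW / tW + 2 * CW), (Rmax tA tW); split.
  - unfold Rmax; destruct (Rle_dec tA tW); lra.
  - exact (holder_with_dual_potential A Astar W CW tW HtW HWh CA tA HtA HA HW).
Qed.

Lemma holder_with_continuous C t f : 0 <= t < 1 -> holder_with C t f -> continuous_S f.
Proof.
  intros Ht Hf x eps He; pose proof (holder_with_nonneg C t f Hf).
  destruct (pow_lt_1_zero t) with (eps / (C + 1)) as [n Hn];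
    [rewrite Rabs_right; lra|apply Rdiv_lt_0_compat; lra|].
  exists n; intros y Hxy; specialize (Hn n (le_n n)).
  rewrite Rabs_right in Hn by (apply Rle_ge, pow_le; lra).
  apply Rmult_lt_compat_l with (r := C + 1) in Hn; [|lra].
  replace ((C + 1) * (eps / (C + 1))) with eps in Hn by (field; lra).
  assert (0 <= t ^ n) by (apply pow_le; lra).
  eapply Rle_lt_trans; [apply Hf, Hxy|nra].
Qed.

Lemma continuous_S_add f g : continuous_S f -> continuous_S g -> continuous_S (fun y => f y + g y).
Proof.
  intros Hf Hg x eps He.
  destruct (Hf x (eps / 2)) as [n1 H1]; [lra|]; destruct (Hg x (eps / 2)) as [n2 H2]; [lra|].
  exists (Nat.max n1 n2); intros y Hxy.
  specialize (H1 y (agree_le _ _ _ _ (Nat.le_max_l _ _) Hxy)).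
  specialize (H2 y (agree_le _ _ _ _ (Nat.le_max_r _ _) Hxy)).
  replace (f x + g x - (f y + g y)) with ((f x - f y) + (g x - g y)) by ring.
  eapply Rle_lt_trans; [apply Rabs_triang|lra].
Qed.

Lemma continuous_S_opp f : continuous_S f -> continuous_S (fun y => - f y).
Proof.
  intros Hf x eps He; destruct (Hf x eps He) as [n Hn]; exists n; intros y Hxy.
  replace (- f x - - f y) with (- (f x - f y)) by ring; rewrite Rabs_Ropp; apply Hn, Hxy.
Qed.

Lemma continuous_S_shift f : continuous_S f -> continuous_S (fun y => f (shift y)).
Proof.
  intros Hf x eps He; destruct (Hf (shift x) eps He) as [n Hn]; exists (S n); intros y Hxy.
  apply Hn; intros i Hi; apply Hxy; lia.
Qed.

Lemma continuous_Rstar Astar Vstar : continuous_S Astar -> continuous_S Vstar ->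
  continuous_S (Rstar Astar Vstar).
Proof.
  intros HA HV.
  exact (continuous_S_add _ _ (continuous_S_add _ _ (continuous_S_shift _ HV) (continuous_S_opp _ HV))
                          (continuous_S_opp _ HA)).
Qed.

Lemma continuous_pos_uniform (g : Sigma -> R) (P : Sigma -> Prop) (zs : list Sigma) L0 :
  continuous_S g -> (forall z, In z zs -> P z -> g z > 0) ->
  exists L c, 0 < c /\ (L0 <= L)%nat /\
    forall z, In z zs -> P z -> forall y, agree L z y -> c <= g y.
Proof.
  intros Hg; induction zs as [|z zs IH]; intros Hpos.
  { exists L0, 1; split; [lra|split; [lia|intros z []]]. }
  destruct IH as [L [c [Hc [HL Hnear]]]]; [intros; apply Hpos; [right|]; assumption|].
  destruct (classic (P z)) as [Hz|Hz].
  - specialize (Hpos z (or_introl eq_refl) Hz).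
    destruct (Hg z (g z / 2)) as [Lz HLz]; [lra|].
    exists (Nat.max L Lz), (Rmin c (g z / 2)); split; [apply Rmin_glb_lt; lra|split; [lia|]].
    pose proof (Rmin_l c (g z / 2)); pose proof (Rmin_r c (g z / 2)).
    intros z' [<-|Hin] Hz' y Hy.
    + specialize (HLz y (agree_le _ _ _ _ (Nat.le_max_r _ _) Hy)); apply Rabs_def2 in HLz; lra.
    + specialize (Hnear z' Hin Hz' y (agree_le _ _ _ _ (Nat.le_max_l _ _) Hy)); lra.
  - exists L, c; split; [exact Hc|split; [exact HL|]].
    intros z' [<-|Hin] Hz'; [contradiction|exact (Hnear z' Hin Hz')].
Qed.

(** * Orbits approaching a periodic orbit *)

Lemma exists_entry_time (P : nat -> Prop) b d : ~ P b -> P (b + d)%nat ->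
  exists n, (b <= n)%nat /\ ~ P n /\ P (S n).
Proof.
  intros Hb; induction d as [|d IH]; intros Hd; [rewrite Nat.add_0_r in Hd; contradiction|].
  destruct (classic (P (b + d)%nat)) as [Hp|Hp]; [exact (IH Hp)|].
  exists (b + d)%nat; split; [lia|split; [exact Hp|]].
  replace (S (b + d)) with (b + S d)%nat by lia; exact Hd.
Qed.

Section PeriodicOrbit.

Variables (M : Sigma -> Prop) (p : Sigma) (N : nat).
Hypothesis Hp : shiftn N p = p.
Hypothesis HM : forall z, M z <-> exists i, (i < N)%nat /\ z = shiftn i p.

Definition near_orbit (L : nat) (y : Sigma) : Prop :=
  exists i, (i < N)%nat /\ agree L (shiftn i p) y.

Definition orbit_preimages : list Sigma :=
  flat_map (fun i => [tau (fun _ => false) (shiftn i p); tau (fun _ => true) (shiftn i p)])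
           (seq 0 N).

Lemma shiftn_orbit_periodic i m : shiftn i p (N + m)%nat = shiftn i p m.
Proof.
  rewrite <- (shiftn_apply N (shiftn i p) m), shiftn_add, Nat.add_comm, <- shiftn_add, Hp.
  reflexivity.
Qed.

(* Staying (N+1)-close to the orbit forces y(m + N) = y(m) for all m, and then y equals the
   orbit point it shadows on its first N symbols. *)
Lemma always_near_orbit_in_M y : (forall n, near_orbit (S N) (shiftn n y)) -> M y.
Proof.
  intros Hnear.
  assert (Hper : forall m, y (N + m)%nat = y m).
  { intro m; destruct (Hnear m) as [i [_ Hag]].
    pose proof (Hag O ltac:(lia)) as E0; pose proof (Hag N ltac:(lia)) as E1.
    assert (Ep : p (i + N)%nat = p i).
    { pose proof (shiftn_orbit_periodic i O) as E; rewrite !shiftn_apply, !Nat.add_0_r in E.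
      exact E. }
    rewrite !shiftn_apply, !Nat.add_0_r in *.
    rewrite Nat.add_comm, <- E1, Ep, E0; reflexivity. }
  destruct (Hnear O) as [i [Hi Hag]]; apply HM; exists i; split; [exact Hi|].
  apply functional_extensionality; intro m.
  induction m as [m IH] using lt_wf_ind.
  destruct (le_lt_dec N m) as [Hle|Hlt].
  - replace m with (N + (m - N))%nat by lia; rewrite Hper, shiftn_orbit_periodic; apply IH; lia.
  - symmetry; apply Hag; lia.
Qed.

Lemma entry_near_orbit_preimage L y : ~ near_orbit L y -> near_orbit L (shift y) ->
  exists z, In z orbit_preimages /\ ~ M z /\ M (shift z) /\ agree L z y.
Proof.
  intros Hfar [i [Hi Hag]].
  set (z := tau (fun _ => y O) (shiftn i p)).
  assert (Hzy : agree L z y) by (intros [|k] Hk; [reflexivity|apply (Hag k); lia]).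
  exists z; split; [|split; [|split]].
  - apply in_flat_map; exists i; split; [apply in_seq; lia|].
    unfold z; destruct (y O); simpl; auto.
  - intros Hz; apply HM in Hz as [j [Hj ->]]; exact (Hfar (ex_intro _ j (conj Hj Hzy))).
  - apply HM; exists i; split; [exact Hi|reflexivity].
  - exact Hzy.
Qed.

(* If [g > 0] on the points entering M from outside and [g] vanishes along the orbit of y, then
   every entry of the orbit into a small neighbourhood of M comes from a point close to M itself;
   an orbit that keeps returning near M can therefore only avoid M by shadowing it forever. *)
Lemma orbit_enters_M (g : Sigma -> R) y : continuous_S g ->
  (forall z, ~ M z -> M (shift z) -> g z > 0) ->
  (forall L n0, exists n, (n0 <= n)%nat /\ near_orbit L (shiftn n y)) ->
  (forall c, 0 < c -> exists n0, forall n, (n0 <= n)%nat -> g (shiftn n y) < c) ->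
  exists k, M (shiftn k y).
Proof.
  intros Hg Hpos Hrec Hsmall.
  destruct (classic (exists k, M (shiftn k y))) as [|Hnever]; [assumption|exfalso].
  destruct (continuous_pos_uniform g (fun z => ~ M z /\ M (shift z)) orbit_preimages (S N) Hg)
    as [L [c [Hc [HL Hlow]]]]; [intros z _ [Hz Hsz]; exact (Hpos z Hz Hsz)|].
  destruct (Hsmall c Hc) as [n0 Hn0].
  assert (Hfar : exists b, (n0 <= b)%nat /\ ~ near_orbit L (shiftn b y)).
  { apply NNPP; intros Hno; apply Hnever; exists n0; apply always_near_orbit_in_M.
    intro n; apply NNPP; intros Hfar; apply Hno; exists (n + n0)%nat; split; [lia|].
    intros [i [Hi Hag]]; apply Hfar; exists i; split; [exact Hi|].
    rewrite shiftn_add; exact (agree_le _ _ _ _ HL Hag). }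
  destruct Hfar as [b [Hb Hfar]].
  destruct (Hrec L (S b)) as [m [Hm Hnear]].
  destruct (exists_entry_time (fun n => near_orbit L (shiftn n y)) b (m - b) Hfar)
    as [n [Hn [Hfar_n Hnear_n]]]; [replace (b + (m - b))%nat with m by lia; exact Hnear|].
  destruct (entry_near_orbit_preimage L (shiftn n y) Hfar_n Hnear_n) as [z [Hz [HzM [Hsz Hzy]]]].
  pose proof (Hlow z Hz (conj HzM Hsz) _ Hzy); pose proof (Hn0 n ltac:(lia)); lra.
Qed.

End PeriodicOrbit.

Theorem mainTheorem6
  (A Astar V Vstar : Sigma -> R) (W : Sigma -> Sigma -> R) (mu0 : list bool -> R)
  (HA : holder A)
  (HW : involution_kernel A Astar W)
  (HmA : m_zero A) (HmAs : m_zero Astar)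
  (HV : calibrated A V) (HVs : calibrated Astar Vstar)
  (HWnorm : V_sup_formula Astar V Vstar W)
  (* the maximizing probability of A* is unique (mu0) ... *)
  (Hmu0 : maximizing Astar mu0)
  (Huniq : forall mu, maximizing Astar mu -> forall u, mu u = mu0 u)
  (* ... and supported on a periodic orbit M = supp mu0 *)
  (Hper : exists p N, (1 <= N)%nat /\ shiftn N p = p /\
            forall z, supp mu0 z <-> exists i, (i < N)%nat /\ z = shiftn i p)
  (* A is good: R* > 0 on P = {w not in M : sigma w in M} *)
  (Hgood : forall w, ~ supp mu0 w -> supp mu0 (shift w) -> Rstar Astar Vstar w > 0)
  (x wx : Sigma) (Hopt : optimal_pair Astar V Vstar W x wx) :
  (exists k, supp mu0 (shiftn k wx)) /\
  (forall k, supp mu0 (shiftn k wx) ->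
     optimal_pair Astar V Vstar W (fst (hatTinvn k (x, wx))) (snd (hatTinvn k (x, wx)))).
Proof.
  split; [|intros k _; exact (optimal_pair_hatTinvn A Astar V Vstar W HW HWnorm x wx k HV Hopt)].
  destruct Hper as [p [N [HN [Hp HM]]]].
  destruct (holder_dual_potential A Astar W HA HW) as [C [t [Ht HAs]]].
  destruct (optimal_birkhoff_bounded_below A Astar V Vstar W HW HWnorm x wx Hopt) as [K HK].
  destruct (krylov_bogolyubov Astar wx C t K Ht HAs HK) as [mu [Hinv [[l [Hl Hl0]] Hnull]]].
  assert (Hmax : maximizing Astar mu).
  { replace l with 0 in Hl by (pose proof (proj1 HmAs mu l Hinv Hl); lra); split; assumption. }
  destruct Hopt as [s [Hs _]].
  apply (orbit_enters_M (supp mu0) p N Hp HM (Rstar Astar Vstar)).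
  - exact (continuous_Rstar _ _ (holder_with_continuous C t Astar ltac:(lra) HAs) (proj1 HVs)).
  - exact Hgood.
  - intros L n0; apply NNPP; intros Hno.
    assert (Hp0 : supp mu0 p) by (apply HM; exists O; split; [lia|reflexivity]).
    specialize (Hp0 L); rewrite <- (Huniq mu Hmax), (Hnull L p n0) in Hp0; [lra|].
    intros n Hn Hag; apply Hno; exists n; split; [exact Hn|exists O; split; [lia|exact Hag]].
  - intros c Hc; exact (infinite_sum_terms_lt _ s c Hs Hc).
Qed.
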